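(* Let $m,n$ be positive integers, let $(W_1,\dots,W_n)$ have the multinomial distribution with parameters $m$ and $(\frac1n,\dots,\frac1n)$, let $\gamma>0$ and put $k_m=\lfloor\gamma\log m\rfloor$. Then there exists a constant $c_\gamma>0$ such that $$\max_{k\le k_m}\ \max_{\substack{s_1,\dots,s_n\in\mathbb{N}_0\\ \sum_{j=1}^ns_j=k}}\Big(\frac nm\Big)^{\sum_{j=1}^n\mathbb{1}\{s_j\ge1\}}\mathbb{E}\big[W_1^{s_1}\cdots W_n^{s_n}\big]\le\Big(1+c_\gamma\frac{m^{1+\gamma}}{n}\Big)^{k_m}.$$ *)

From HB Require Import structures.
From mathcomp Require Import all_boot all_order all_algebra.
From mathcomp Require Import all_classical all_reals all_analysis.
Set Implicit Arguments. Unset Strict Implicit. Unset Printing Implicit Defensive.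
Import Order.TTheory GRing.Theory Num.Theory.
Local Open Scope ring_scope.

(* Multinomial(m; 1/n,...,1/n) probability mass at the occupancy vector w
   (w j = number of the m trials landing in cell j):
   m! / (w_1! ... w_n!) * (1/n)^m, when sum_j w_j = m. *)
Definition multinom_pmf (R : realType) (m n : nat) (w : {ffun 'I_n -> 'I_m.+1}) : R :=
  if (\sum_j (w j : nat) == m)%N
  then (m`!)%:R / (\prod_j ((w j : nat)`!))%:R * (n%:R^-1) ^+ m
  else 0.

(* E[W_1^{s_1} ... W_n^{s_n}] for (W_1,...,W_n) ~ Multinomial(m; 1/n,...,1/n);
   the support {w : sum w = m} is contained in {0..m}^n. *)
Definition multinom_moment (R : realType) (m n : nat) (s : 'I_n -> nat) : R :=
  \sum_(w : {ffun 'I_n -> 'I_m.+1})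
     @multinom_pmf R m n w * \prod_j ((w j : nat)%:R ^+ s j).

(* k_m = floor (gamma * log m), as a natural number (m >= 1 so it is >= 0). *)
Definition kmax (R : realType) (gamma : R) (m : nat) : nat :=
  `|Num.floor (gamma * ln (m%:R : R))|%N.

(* Writing (W_j + a_j)^(t+1) = (W_j + a_j)^t W_j + a_j (W_j + a_j)^t and size biasing the
   first term, E_m[W_j F(W)] = (m/n) E_{m-1}[F(W + e_j)], expresses the mixed moment
   E_m[prod_i (W_i + a_i)^(s_i)] through two moments of total degree one less, one of them
   with a_j raised by one.  Induction on the degree bounds it by prod_i h(a_i, s_i), where,
   for lam >= m/n and g >= 2^(sum s), h(a, t) = (a + lam g)^t if a > 0 and
   h(0, t) = lam (1 + lam g)^(t-1) if t > 0; the recursion closes because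
   (x + 1)^t <= 2^t x^t <= g x^t for x >= 1.  At a = 0 every occupied cell carries one
   factor lam = m/n, cancelled by the prefactor (n/m)^#{i | s_i > 0}, and
   g = 2^(k_m) <= m^gamma gives c_gamma = 1. *)

From HB Require Import structures.
From mathcomp Require Import all_boot all_order all_algebra.
From mathcomp Require Import all_classical all_reals all_analysis.
From mathcomp Require Import ring lra.
Import Order.TTheory GRing.Theory Num.Theory.
Local Open Scope ring_scope.

Section ShiftAt.
Context {n : nat}.

Definition incr_at (j : 'I_n) (f : 'I_n -> nat) (i : 'I_n) : nat := (f i + (i == j))%N.
Definition decr_at (j : 'I_n) (f : 'I_n -> nat) (i : 'I_n) : nat := (f i - (i == j))%N.

Lemma incr_at_id j f : incr_at j f j = (f j).+1.
Proof. by rewrite /incr_at eqxx addn1. Qed.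

Lemma incr_at_ne j f i : i != j -> incr_at j f i = f i.
Proof. by move=> /negbTE ij; rewrite /incr_at ij addn0. Qed.

Lemma decr_at_id j f : decr_at j f j = (f j).-1.
Proof. by rewrite /decr_at eqxx subn1. Qed.

Lemma decr_at_ne j f i : i != j -> decr_at j f i = f i.
Proof. by move=> /negbTE ij; rewrite /decr_at ij subn0. Qed.

Lemma sum_decr_at j f : (0 < f j)%N -> (\sum_i decr_at j f i).+1 = (\sum_i f i)%N.
Proof.
move=> fj; rewrite (bigD1 j) //= [RHS](bigD1 j) //= decr_at_id -addSn prednK //.
by congr (_ + _)%N; apply: eq_bigr => i; apply: decr_at_ne.
Qed.

End ShiftAt.

Section MultinomialExpectation.
Context {R : numFieldType} {n : nat}.
Variable M : nat.
Hypothesis n_gt0 : (0 < n)%N.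
Local Notation occupancy := {ffun 'I_n -> 'I_M.+1}.

Definition counts (w : occupancy) (i : 'I_n) : nat := w i.

Definition occ_size (w : occupancy) : nat := (\sum_i counts w i)%N.

Definition multinom_weight (m : nat) (w : occupancy) : R :=
  m`!%:R / (\prod_i (counts w i)`!)%:R * n%:R^-1 ^+ m.

(* Counts are capped at [M], so that every [m <= M] lives in the same finite type. *)
Definition multinom_expect (m : nat) (F : ('I_n -> nat) -> R) : R :=
  \sum_(w | occ_size w == m) multinom_weight m w * F (counts w).

Lemma multinom_expectD m F G :
  multinom_expect m (fun c => F c + G c) = multinom_expect m F + multinom_expect m G.
Proof. by rewrite -big_split; apply: eq_bigr => w _; rewrite mulrDr. Qed.

Lemma multinom_expectZ m a F :
  multinom_expect m (fun c => a * F c) = a * multinom_expect m F.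
Proof. by rewrite big_distrr; apply: eq_bigr => w _; rewrite mulrCA. Qed.

Lemma counts_le_occ_size w j : (counts w j <= occ_size w)%N.
Proof. by rewrite /occ_size (bigD1 j) //= leq_addr. Qed.

Definition incr_occ (j : 'I_n) (w : occupancy) : occupancy :=
  [ffun i => inord (incr_at j (counts w) i)].
Definition decr_occ (j : 'I_n) (w : occupancy) : occupancy :=
  [ffun i => inord (decr_at j (counts w) i)].

Lemma counts_incr_occ j w : (counts w j < M)%N ->
  counts (incr_occ j w) = incr_at j (counts w).
Proof.
move=> wj; apply: funext => i; rewrite /counts ffunE inordK //.
have [->|ij] := eqVneq i j; first by rewrite incr_at_id.
by rewrite incr_at_ne ?ltn_ord.
Qed.

Lemma incr_occK j w : (counts w j < M)%N -> decr_occ j (incr_occ j w) = w.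
Proof.
move=> wj; apply/ffunP => i; apply: ord_inj.
by rewrite ffunE counts_incr_occ // /decr_at /incr_at addnK inord_val.
Qed.

Lemma counts_decr_occ j w : counts (decr_occ j w) = decr_at j (counts w).
Proof.
apply: funext => i; rewrite /counts ffunE inordK //.
exact: leq_ltn_trans (leq_subr _ _) (ltn_ord _).
Qed.

Lemma decr_occK j w : (0 < counts w j)%N -> incr_occ j (decr_occ j w) = w.
Proof.
move=> wj; apply/ffunP => i; apply: ord_inj.
rewrite ffunE counts_decr_occ /incr_at /decr_at.
have [->|_] := eqVneq i j; last by rewrite subn0 addn0 inord_val.
by rewrite subnK // inord_val.
Qed.

Lemma occ_size_incr_occ j w : (counts w j < M)%N ->
  occ_size (incr_occ j w) = (occ_size w).+1.
Proof.
move=> wj; rewrite /occ_size counts_incr_occ // /incr_at big_split /= -addn1.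
by congr (_ + _)%N; rewrite (bigD1 j) //= eqxx big1 // => i /negbTE ->.
Qed.

(* [inord] sends the out-of-range count [M.+1] back to [0]. *)
Lemma incr_occ_full j w : ~~ (counts w j < M)%N -> counts (incr_occ j w) j = 0%N.
Proof.
move=> wj; have wjM : counts w j = M by apply/eqP; rewrite eqn_leq -ltnS ltn_ord leqNgt.
by rewrite {1}/counts ffunE incr_at_id wjM /inord /insubd insubF ?ltnn.
Qed.

Lemma multinom_weight_incr_occ m j w : (counts w j < M)%N ->
  multinom_weight m.+1 (incr_occ j w) * (counts w j).+1%:R =
  m.+1%:R / n%:R * multinom_weight m w.
Proof.
move=> wj; rewrite /multinom_weight counts_incr_occ //.
have -> : (\prod_i (incr_at j (counts w) i)`!)%N =
          ((counts w j).+1 * \prod_i (counts w i)`!)%N.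
  rewrite (bigD1 j) //= [in RHS](bigD1 j) //= incr_at_id factS mulnA; congr (_ * _)%N.
  by apply: eq_bigr => i; move/incr_at_ne ->.
have fact0 : ((\prod_i (counts w i)`!)%N%:R : R) != 0.
  by rewrite pnatr_eq0 -lt0n prodn_gt0 // => i; exact: fact_gt0.
have n0 : (n%:R : R) != 0 by rewrite pnatr_eq0 -lt0n.
rewrite factS !natrM exprS; field.
by rewrite fact0 n0 nat1r pnatr_eq0.
Qed.

Lemma multinom_expect_size_bias m j F : (m <= M)%N ->
  multinom_expect m (fun c => (c j)%:R * F c) =
  m%:R / n%:R * multinom_expect m.-1 (F \o incr_at j).
Proof.
case: m => [|m] hm.
  rewrite !mul0r /multinom_expect big1 // => w /eqP w0.
  have := counts_le_occ_size w j; rewrite w0 leqn0 => /eqP ->.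
  by rewrite mul0r mulr0.
rewrite /multinom_expect (bigID (fun w => 0 < counts w j)%N) /= [X in _ + X]big1 ?addr0; last first.
  by move=> w /andP[_]; rewrite -eqn0Ngt => /eqP ->; rewrite mul0r mulr0.
rewrite (reindex_onto (incr_occ j) (decr_occ j)) => [|w /andP[_]]; last exact: decr_occK.
rewrite big_distrr /=; apply: eq_big => w.
  have [wj|wj] := ltnP (counts w j) M.
    by rewrite occ_size_incr_occ // incr_occK // counts_incr_occ // incr_at_id eqxx !andbT.
  rewrite incr_occ_full -?leqNgt // ltnn andbF; apply/esym/negbTE.
  by rewrite neq_ltn (leq_trans hm (leq_trans wj (counts_le_occ_size w j))) orbT.
move=> /andP[/andP[_ pos] _].
have wj : (counts w j < M)%N by apply: contraTT pos => /incr_occ_full ->.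
by rewrite counts_incr_occ // incr_at_id mulrA multinom_weight_incr_occ // !mulrA.
Qed.

Lemma multinom_expect_sum_counts m F :
  \sum_j multinom_expect m (fun c => (c j)%:R * F c) = m%:R * multinom_expect m F.
Proof.
rewrite exchange_big big_distrr /=; apply: eq_bigr => w /eqP <-.
by rewrite /occ_size natr_sum mulr_suml; apply: eq_bigr => j _; rewrite mulrCA.
Qed.

Lemma multinom_expect1 m : (m <= M)%N -> multinom_expect m (fun=> 1) = 1.
Proof.
elim: m => [|m IH] hm.
  rewrite /multinom_expect (big_pred1 [ffun=> ord0]) => [|w].
    rewrite /multinom_weight big1 => [|i _]; last by rewrite /counts ffunE.
    by rewrite fact0 expr0 !mulr1 divr1.
  rewrite /= /occ_size sum_nat_eq0; apply/forallP/eqP => [w0|-> i]; last first.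
    by rewrite /counts ffunE.
  by apply/ffunP => i; apply: ord_inj; rewrite ffunE; apply/eqP/w0.
have m0 : (m.+1%:R : R) != 0 by rewrite pnatr_eq0.
have n0 : (n%:R : R) != 0 by rewrite pnatr_eq0 -lt0n.
apply: (mulfI m0); rewrite -multinom_expect_sum_counts mulr1.
rewrite (eq_bigr (fun=> m.+1%:R / n%:R)) => [|j _].
  by rewrite sumr_const card_ord -[_ *+ n]mulr_natr divfK.
by rewrite (multinom_expect_size_bias _ _ (fun=> 1)) // IH ?mulr1 // ltnW.
Qed.

End MultinomialExpectation.

Section MomentBound.
Context {R : realFieldType} {lam g : R}.
Hypotheses (lam_ge0 : 0 <= lam) (g_ge0 : 0 <= g).

Definition moment_bound (a t : nat) : R :=
  if a is 0 then (if t is t'.+1 then lam * (1 + lam * g) ^+ t' else 1)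
  else (a%:R + lam * g) ^+ t.

Lemma moment_bound_ge0 a t : 0 <= moment_bound a t.
Proof.
have lg : 0 <= lam * g by rewrite mulr_ge0.
by case: a t => [|a] [|t] //=; rewrite ?mulr_ge0 ?exprn_ge0 ?addr_ge0.
Qed.

Lemma moment_bound_step a t : 2 ^+ t <= g ->
  lam * moment_bound a.+1 t + a%:R * moment_bound a t <= moment_bound a t.+1.
Proof.
move=> gt; case: a => [|a] /=; first by rewrite mul0r addr0.
set x := a.+1%:R + lam * g.
have x1 : 1 <= x by rewrite /x -nat1r -addrA lerDl addr_ge0 ?mulr_ge0.
have Sx : (a.+2%:R + lam * g) = x + 1 by rewrite /x -natr1 addrAC.
have Sx_le : (x + 1) ^+ t <= g * x ^+ t.
  apply: le_trans (_ : (x *+ 2) ^+ t <= _).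
    by apply: lerXn2r; rewrite ?nnegrE; lra.
  by rewrite -mulr_natl exprMn ler_wpM2r ?exprn_ge0 //; lra.
have xSx : x ^+ t.+1 = lam * (g * x ^+ t) + a.+1%:R * x ^+ t.
  by rewrite exprS /x; ring.
by rewrite Sx xSx lerD2r ler_wpM2l.
Qed.

Lemma moment_bound0_le t : lam != 0 ->
  (if (0 < t)%N then lam^-1 else 1) * moment_bound 0 t <= (1 + lam * g) ^+ t.
Proof.
move=> lam0; case: t => [|t] /=; first by rewrite mul1r.
rewrite mulKf // exprS ler_peMl ?exprn_ge0 ?lerDl ?mulr_ge0 //.
by apply: addr_ge0; rewrite ?mulr_ge0.
Qed.

Lemma prod_moment_bound0_le {n} (s : 'I_n -> nat) : lam != 0 ->
  lam^-1 ^+ #|[pred j | (0 < s j)%N]| * \prod_i moment_bound 0 (s i)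
  <= (1 + lam * g) ^+ (\sum_i s i).
Proof.
move=> lam0; rewrite -prodr_const big_mkcond -big_split -prodrXr.
apply: ler_prod => i _; rewrite inE mulr_ge0 ?moment_bound_ge0 ?moment_bound0_le //.
by case: ifP; rewrite ?invr_ge0.
Qed.

Lemma prod_moment_bound_step {n} j (a s : 'I_n -> nat) (mu x1 x2 : R) :
  0 <= mu <= lam -> (0 < s j)%N -> 2 ^+ (s j).-1 <= g ->
  x1 <= \prod_i moment_bound (incr_at j a i) (decr_at j s i) ->
  x2 <= \prod_i moment_bound (a i) (decr_at j s i) ->
  mu * x1 + (a j)%:R * x2 <= \prod_i moment_bound (a i) (s i).
Proof.
move=> /andP[mu_ge0 mu_le] sj gt le1 le2.
set C := \prod_(i | i != j) moment_bound (a i) (s i).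
have C_ge0 : 0 <= C by apply: prodr_ge0 => i _; apply: moment_bound_ge0.
have prodE (b u : 'I_n -> nat) : (forall i, i != j -> b i = a i /\ u i = s i) ->
    \prod_i moment_bound (b i) (u i) = moment_bound (b j) (u j) * C.
  by move=> bu; rewrite (bigD1 j) //=; congr (_ * _); apply: eq_bigr => i /bu[-> ->].
rewrite prodE ?incr_at_id ?decr_at_id in le1 => [|i ij]; last first.
  by rewrite incr_at_ne ?decr_at_ne.
rewrite prodE ?decr_at_id in le2 => [|i ij]; last by rewrite decr_at_ne.
rewrite (prodE a s) // -(prednK sj).
apply: le_trans (_ : lam * (moment_bound (a j).+1 (s j).-1 * C) +
                     (a j)%:R * (moment_bound (a j) (s j).-1 * C) <= _).
  apply: lerD; last exact: ler_wpM2l le2.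
  apply: le_trans (ler_wpM2l mu_ge0 le1) _.
  by rewrite ler_wpM2r ?mulr_ge0 ?moment_bound_ge0.
by rewrite !mulrA -mulrDl ler_wpM2r // moment_bound_step.
Qed.

End MomentBound.

Arguments moment_bound {R} lam g a t.

Section ShiftedMoments.
Context {R : realFieldType} {n M : nat} {lam g : R}.
Hypotheses (n_gt0 : (0 < n)%N) (lam_ge0 : 0 <= lam) (g_ge0 : 0 <= g).

Definition shifted_monomial (a s c : 'I_n -> nat) : R := \prod_i (c i + a i)%:R ^+ s i.

Lemma shifted_monomial_incr_at j a s c :
  shifted_monomial a s (incr_at j c) = shifted_monomial (incr_at j a) s c.
Proof. by apply: eq_bigr => i _; rewrite /incr_at addnAC addnA. Qed.

Lemma shifted_monomial_decr_at j a s c : (0 < s j)%N ->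
  shifted_monomial a s c = ((c j)%:R + (a j)%:R) * shifted_monomial a (decr_at j s) c.
Proof.
move=> sj; rewrite /shifted_monomial (bigD1 j) //= [in RHS](bigD1 j) //= decr_at_id.
rewrite -natrD mulrA -exprS prednK //; congr (_ * _).
by apply: eq_bigr => i ij; rewrite decr_at_ne.
Qed.

Lemma multinom_expect_shifted_monomial m j a s : (m <= M)%N -> (0 < s j)%N ->
  multinom_expect M m (shifted_monomial a s) =
    m%:R / n%:R * multinom_expect M m.-1 (shifted_monomial (incr_at j a) (decr_at j s))
    + (a j)%:R * multinom_expect M m (shifted_monomial a (decr_at j s)).
Proof.
move=> hm sj; pose F := shifted_monomial a (decr_at j s).
have -> : shifted_monomial a s = fun c => (c j)%:R * F c + (a j)%:R * F c.
  by apply: funext => c; rewrite (shifted_monomial_decr_at j) // mulrDl.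
rewrite multinom_expectD multinom_expectZ multinom_expect_size_bias //; congr (_ * _ + _).
by congr (multinom_expect _ _); apply: funext => c; apply: shifted_monomial_incr_at.
Qed.

Lemma multinom_expect_shifted_monomial_le m a s :
  (m <= M)%N -> m%:R / n%:R <= lam -> 2 ^+ (\sum_i s i) <= g ->
  multinom_expect M m (shifted_monomial a s) <= \prod_i moment_bound lam g (a i) (s i).
Proof.
move es: (\sum_i s i)%N => k.
elim: k => [|k IH] in m a s es * => hm hlam hg.
  move/eqP: es; rewrite sum_nat_eq0 => /forallP s0.
  have -> : shifted_monomial a s = fun=> 1.
    by apply: funext => c; apply: big1 => i _; rewrite (eqP (s0 i)).
  by rewrite multinom_expect1 // big1 // => i _; rewrite (eqP (s0 i)); case: (a i).
have /existsP [j sj] : [exists j, 0 < s j]%N.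
  apply: contra_eqT es => /existsPn s0; rewrite big1 // => i _.
  by apply/eqP; rewrite eqn0Ngt s0.
have es' : (\sum_i decr_at j s i)%N = k by apply: succn_inj; rewrite sum_decr_at.
have hk : 2 ^+ k <= g by apply: le_trans hg; rewrite ler_weXn2l ?ler1n.
have sjk : ((s j).-1 <= k)%N by rewrite -ltnS prednK // -es (bigD1 j) //= leq_addr.
have hlam' : m.-1%:R / n%:R <= lam.
  by apply: le_trans hlam; rewrite ler_wpM2r ?invr_ge0 ?ler_nat ?leq_pred.
rewrite (multinom_expect_shifted_monomial _ j) //.
apply: prod_moment_bound_step => //.
- by rewrite divr_ge0 ?hlam.
- by apply: le_trans hk; rewrite ler_weXn2l ?ler1n.
- exact: IH es' (leq_trans (leq_pred m) hm) hlam' hk.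
- exact: IH es' hm hlam hk.
Qed.

End ShiftedMoments.

Lemma multinom_momentE (R : realType) m n (s : 'I_n -> nat) :
  @multinom_moment R m n s = multinom_expect m m (shifted_monomial (fun=> 0%N) s).
Proof.
rewrite /multinom_moment /multinom_expect [RHS]big_mkcond; apply: eq_bigr => w _.
rewrite /multinom_pmf /occ_size /multinom_weight /counts; case: ifP => _; last by rewrite mul0r.
by congr (_ * _); apply: eq_bigr => i _; rewrite addn0.
Qed.

Lemma exp2_kmax_le (R : realType) (gamma : R) m : 0 <= gamma -> (0 < m)%N ->
  2 ^+ kmax gamma m <= m%:R `^ gamma.
Proof.
move=> gamma_ge0 m_gt0.
have m0 : (m%:R : R) != 0 by rewrite pnatr_eq0 -lt0n.
have log_ge0 : 0 <= gamma * ln m%:R by rewrite mulr_ge0 ?ln_ge0 ?ler1n.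
have kmax_le : (kmax gamma m)%:R <= gamma * ln (m%:R : R).
  by rewrite /kmax natr_absz ger0_norm ?floor_ge0 ?floor_le.
apply: le_trans (_ : expR 1 ^+ kmax gamma m <= _).
  by rewrite lerXn2r ?nnegrE ?expR_ge0 //; have := expR_ge1Dx (1 : R); lra.
by rewrite -expRM_natl mulr1 /powR (negbTE m0) ler_expR.
Qed.

Theorem lemma4p4 (R : realType) (gamma : R) :
  0 < gamma ->
  exists c : R, 0 < c /\
    forall (m n : nat), (0 < m)%N -> (0 < n)%N ->
    forall s : 'I_n -> nat,
      (\sum_j s j <= kmax gamma m)%N ->
      (n%:R / m%:R) ^+ #|[pred j | (0 < s j)%N]| * @multinom_moment R m n s
      <= (1 + c * ((m%:R : R) `^ (1 + gamma)) / n%:R) ^+ kmax gamma m.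
Proof.
move=> gamma_gt0; exists 1; split=> // m n m_gt0 n_gt0 s hs.
set K := kmax gamma m; pose lam : R := m%:R / n%:R; pose g : R := 2 ^+ K.
have lam_ge0 : 0 <= lam by rewrite divr_ge0.
have lam0 : lam != 0 by rewrite mulf_neq0 ?invr_eq0 ?pnatr_eq0 -?lt0n.
have g_ge0 : 0 <= g by rewrite exprn_ge0.
have sum_s_le : 2 ^+ (\sum_j s j) <= g by rewrite ler_weXn2l ?ler1n.
have := multinom_expect_shifted_monomial_le n_gt0 lam_ge0 g_ge0 m (fun=> 0%N) s
  (leqnn m) (lexx lam) sum_s_le.
rewrite -multinom_momentE -[n%:R / m%:R]invf_div -/lam => moment_le.
apply: le_trans (ler_wpM2l _ moment_le) _; first by rewrite exprn_ge0 ?invr_ge0.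
apply: le_trans (prod_moment_bound0_le lam_ge0 g_ge0 s lam0) _.
have x_ge1 : 1 <= 1 + lam * g by rewrite lerDl mulr_ge0.
apply: le_trans (ler_weXn2l x_ge1 hs) _.
rewrite -/K lerXn2r ?nnegrE ?addr_ge0 ?mulr_ge0 // lerD2l mul1r.
rewrite powRD ?pnatr_eq0 -?lt0n ?m_gt0 ?implybT // powRr1 // [X in _ <= X]mulrAC ler_wpM2l //.
exact: exp2_kmax_le (ltW gamma_gt0) m_gt0.
Qed.
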